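(* Let $f:\mathbb{R}^n\to\mathbb{R}$ be continuously differentiable and bounded below, with $\nabla f$ Lipschitz continuous on $\mathbb{R}^n$ with constant $L(f)$, let $s$ be an integer with $0<s<n$, and let $L>L(f)$. Let $\mathbf{x}^*$ be an optimal solution of the problem (P): minimize $f(\mathbf{x})$ subject to $\|\mathbf{x}\|_0\le s$. Then (i) $\mathbf{x}^*$ is an $L$-stationary point of (P); and (ii) the set $P_{C_s}\!\left(\mathbf{x}^*-\frac1L\nabla f(\mathbf{x}^* )\right)$ consists of exactly one element.
   Context: $\|\mathbf{x}\|_0$ is the number of nonzero components of $\mathbf{x}$ and $C_s=\{\mathbf{x}:\|\mathbf{x}\|_0\le s\}$. For a closed set $D$, $P_D(\mathbf{y})=\operatorname{argmin}_{\mathbf{x}\in D}\|\mathbf{x}-\mathbf{y}\|^2$ (possibly multi-valued). A vector $\mathbf{x}^*\in C_s$ is an $L$-stationary point of (P) if $\mathbf{x}^*\in P_{C_s}\!\left(\mathbf{x}^*-\frac1L\nabla f(\mathbf{x}^* )\right)$. ''$\nabla f$ Lipschitz with constant $L(f)$'' means $\|\nabla f(\mathbf{x})-\nabla f(\mathbf{y})\|\le L(f)\|\mathbf{x}-\mathbf{y}\|$ for all $\mathbf{x},\mathbf{y}$. *)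

From HB Require Import structures.
From mathcomp Require Import all_boot all_order all_algebra.
From mathcomp Require Import all_classical all_reals all_analysis.
Unset Printing Implicit Defensive.
Import Order.TTheory GRing.Theory Num.Theory.
Import numFieldNormedType.Exports.
Local Open Scope classical_set_scope.
Local Open Scope ring_scope.

Definition l0norm {R : realType} {n : nat} (x : 'rV[R]_n) : nat :=
  #|[set i : 'I_n | x ord0 i != 0]|.

Definition Cs {R : realType} (n s : nat) : set 'rV[R]_n :=
  [set x | (l0norm x <= s)%N].

Definition sqnorm {R : realType} {n : nat} (x : 'rV[R]_n) : R :=
  \sum_(i < n) (x ord0 i) ^+ 2.
Definition enorm {R : realType} {n : nat} (x : 'rV[R]_n) : R :=
  Num.sqrt (sqnorm x).

(* Orthogonal projection onto D (as a set, possibly multi-valued) *)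
Definition projC {R : realType} {n : nat} (D : set 'rV[R]_n) (y : 'rV[R]_n)
  : set 'rV[R]_n :=
  [set x | D x /\ forall z, D z -> sqnorm (x - y) <= sqnorm (z - y)].

Definition grad {R : realType} {n : nat} (f : 'rV[R]_n -> R) (x : 'rV[R]_n)
  : 'rV[R]_n :=
  \row_(i < n) ('D_(delta_mx ord0 i) f x).

Definition L_stationary {R : realType} (n s : nat) (f : 'rV[R]_n -> R)
  (L : R) (x : 'rV[R]_n) : Prop :=
  Cs n s x /\ projC (Cs n s) (x - L^-1 *: grad f x) x.

From HB Require Import structures.
From mathcomp Require Import all_boot all_order all_algebra.
From mathcomp Require Import all_classical all_reals all_analysis.
From mathcomp Require Import ring lra.
Import Order.TTheory GRing.Theory Num.Theory.
Import numFieldNormedType.Exports.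
Local Open Scope classical_set_scope.
Local Open Scope ring_scope.

(* By the descent lemma, f z <= f x + <grad f x, z - x> + (L(f)/2) |z - x|^2.
   Expanding |z - y|^2 - |x - y|^2 for the gradient step y = x - (1/L) grad f x
   turns this into
     (1 - L(f)/L) |z - x|^2 + (2/L) (f z - f x) <= |z - y|^2 - |x - y|^2.
   When x minimizes f over C_s the second term on the left is nonnegative for
   every z in C_s, so since L > L(f) every other point of C_s is strictly
   farther from y than x: the projection of y onto C_s is exactly {x}. *)

Section EuclideanRow.
Context {R : realType} {n : nat}.
Implicit Types u v w : 'rV[R]_n.

Definition dot u v : R := \sum_(i < n) u ord0 i * v ord0 i.

Lemma dotC u v : dot u v = dot v u.
Proof. by apply: eq_bigr => i _; rewrite mulrC. Qed.

Lemma dotZr (c : R) u v : dot u (c *: v) = c * dot u v.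
Proof. by rewrite /dot mulr_sumr; apply: eq_bigr => i _; rewrite mxE; ring. Qed.

Lemma dotBl u v w : dot (u - v) w = dot u w - dot v w.
Proof. by rewrite /dot -sumrB; apply: eq_bigr => i _; rewrite !mxE; ring. Qed.

Lemma sqnorm_ge0 u : 0 <= sqnorm u.
Proof. by apply: sumr_ge0 => i _; rewrite sqr_ge0. Qed.

Lemma sqnorm_eq0 u : (sqnorm u == 0) = (u == 0).
Proof.
apply/idP/eqP => [|->]; last by rewrite /sqnorm big1 // => i _; rewrite mxE expr0n.
rewrite psumr_eq0 => [/allP u0|i _]; last exact: sqr_ge0.
by apply/rowP => i; apply/eqP; rewrite mxE -sqrf_eq0; exact: u0 (mem_index_enum _).
Qed.

Lemma sqnormD u v : sqnorm (u + v) = sqnorm u + 2 * dot u v + sqnorm v.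
Proof.
rewrite /sqnorm /dot mulr_sumr -!big_split /=.
by apply: eq_bigr => i _; rewrite mxE; ring.
Qed.

Lemma sqnormZ (c : R) u : sqnorm (c *: u) = c ^+ 2 * sqnorm u.
Proof. by rewrite /sqnorm mulr_sumr; apply: eq_bigr => i _; rewrite mxE; ring. Qed.

Lemma enorm_ge0 u : 0 <= enorm u.
Proof. exact: sqrtr_ge0. Qed.

Lemma sqr_enorm u : enorm u ^+ 2 = sqnorm u.
Proof. by rewrite sqr_sqrtr // sqnorm_ge0. Qed.

Lemma enormZ (c : R) u : enorm (c *: u) = `|c| * enorm u.
Proof. by rewrite /enorm sqnormZ sqrtrM ?sqr_ge0 // sqrtr_sqr. Qed.

Lemma enorm_eq0 u : (enorm u == 0) = (u == 0).
Proof. by rewrite sqrtr_eq0 -sqnorm_eq0 eq_le sqnorm_ge0 andbT. Qed.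

(* Expand [0 <= |b u - a v|^2] with [a = |u|] and [b = |v|]. *)
Lemma dot_CauchySchwarz u v : dot u v <= enorm u * enorm v.
Proof.
set a := enorm u; set b := enorm v.
have ab_ge0 : 0 <= a * b by rewrite mulr_ge0 ?enorm_ge0.
have key : a * b * dot u v <= (a * b) ^+ 2.
  have : 0 <= \sum_(i < n) (b * u ord0 i - a * v ord0 i) ^+ 2.
    by apply: sumr_ge0 => i _; exact: sqr_ge0.
  rewrite (eq_bigr (fun i => b ^+ 2 * u ord0 i ^+ 2 + a ^+ 2 * v ord0 i ^+ 2
      - 2 * (a * b) * (u ord0 i * v ord0 i))) => [|i _]; last by ring.
  rewrite sumrB big_split /= -!mulr_sumr.
  by rewrite -/(sqnorm u) -/(sqnorm v) -/(dot u v) -!sqr_enorm -/a -/b; nra.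
have [ab0|ab_neq0] := eqVneq (a * b) 0.
  move/eqP: ab0; rewrite mulf_eq0 !enorm_eq0 => /orP[] /eqP->;
  by rewrite /dot big1 // => i _; rewrite mxE ?mul0r ?mulr0.
have ab_gt0 : 0 < a * b by rewrite lt0r ab_neq0.
by rewrite -(ler_pM2l ab_gt0) -expr2.
Qed.

Lemma dot_le_sqnorm u v (a : R) :
  enorm u <= a * enorm v -> dot u v <= a * sqnorm v.
Proof.
move=> uv; apply: le_trans (dot_CauchySchwarz u v) _.
by rewrite -sqr_enorm expr2 mulrA ler_wpM2r ?enorm_ge0.
Qed.

Lemma enorm_lipschitz_ge0 (g : 'rV[R]_n -> 'rV[R]_n) (K : R) : (0 < n)%N ->
  (forall u v, enorm (g u - g v) <= K * enorm (u - v)) -> 0 <= K.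
Proof.
move=> n_gt0 lipg; pose e : 'rV[R]_n := delta_mx ord0 (Ordinal n_gt0).
have e_gt0 : 0 < enorm e.
  rewrite lt0r enorm_ge0 andbT enorm_eq0; apply/eqP => /rowP/(_ (Ordinal n_gt0)).
  by rewrite !mxE !eqxx; exact/eqP/oner_neq0.
rewrite -(pmulr_lge0 _ e_gt0) -[e]subr0.
exact: le_trans (enorm_ge0 _) (lipg e 0).
Qed.

End EuclideanRow.

Lemma is_derive_line {R : realType} (V : normedModType R) (f : V -> R)
    (x d : V) (t : R) :
  derivable f (x + t *: d) d ->
  is_derive t 1 (fun s => f (x + s *: d)) ('D_d f (x + t *: d)).
Proof.
have quot : (fun h : R => h^-1 *: (f (x + (h *: 1 + t) *: d) - f (x + t *: d)))
    = (fun h => h^-1 *: (f (h *: d + (x + t *: d)) - f (x + t *: d))).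
  by apply/funext => h; rewrite [h *: 1]mulr1 scalerDl addrCA addrA.
by move=> df; apply: DeriveDef; rewrite /derivable /derive quot.
Qed.

Section Descent.
Context {R : realType} {n : nat}.
Variable f : 'rV[R]_n -> R.
Hypothesis f_diff : forall x, differentiable f x.

Lemma derive_grad x v : 'D_v f x = dot (grad f x) v.
Proof.
rewrite deriveE // {1}(row_sum_delta v) linear_sum; apply: eq_bigr => i _.
by rewrite linearZ /= -deriveE // /grad mxE mulrC.
Qed.

Lemma is_derive_quadratic (G K t : R) :
  is_derive t 1 ((@id R) * cst G + (@id R) ^+ 2 * cst K) (G + 2 * t * K).
Proof.
apply: is_derive_eq; rewrite !scaler0 !add0r !fctE /= expr1 /cst.
by rewrite /GRing.scale /= !mulr1 mulrC.
Qed.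

Variable Lf : R.
Hypothesis grad_lipschitz :
  forall x y, enorm (grad f x - grad f y) <= Lf * enorm (x - y).

(* The mean value theorem is applied to [f] along the segment minus the
   quadratic [s G + s^2 K]: comparing with the quadratic, rather than bounding
   the gradient at a single mean value point, is what yields the constant [Lf/2]. *)
Lemma descent x z :
  f z <= f x + dot (grad f x) (z - x) + Lf / 2 * sqnorm (z - x).
Proof.
set d := z - x; set G := dot (grad f x) d; set K := Lf / 2 * sqnorm d.
pose psi := (fun s => f (x + s *: d)) - ((@id R) * cst G + (@id R) ^+ 2 * cst K).
have dpsi (t : R) : is_derive t 1 psi (dot (grad f (x + t *: d)) d - (G + 2 * t * K)).
  rewrite -derive_grad; apply: is_deriveB; last exact: is_derive_quadratic.
  exact/is_derive_line/diff_derivable.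
have psi_cont : {within `[0, 1], continuous psi}.
  by apply: derivable_within_continuous => t _; case: (dpsi t).
have [c /[!in_itv] /= /andP[c_gt0 c_lt1]] := MVT ltr01 (fun t _ => dpsi t) psi_cont.
rewrite /psi !fctE /= scale0r scale1r addr0 [x + d](_ : _ = z); last first.
  by rewrite /d addrC subrK.
have gradB : dot (grad f (x + c *: d) - grad f x) d <= Lf * c * sqnorm d.
  apply: dot_le_sqnorm; apply: le_trans (grad_lipschitz _ _) _.
  by rewrite addrC addKr enormZ (ger0_norm (ltW c_gt0)) mulrA.
rewrite dotBl -/G in gradB; rewrite /K; lra.
Qed.

Lemma gradient_step_gap (c : R) x z : 0 <= c ->
  (1 - c * Lf) * sqnorm (z - x) + 2 * c * (f z - f x)
    <= sqnorm (z - (x - c *: grad f x)) - sqnorm (x - (x - c *: grad f x)).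
Proof.
move=> c_ge0; set g := grad f x.
have -> : z - (x - c *: g) = (z - x) + c *: g by rewrite opprB addrA addrAC.
have -> : x - (x - c *: g) = c *: g by rewrite opprB addrC subrK.
rewrite (sqnormD (z - x)) dotZr addrK dotC.
have := descent x z; rewrite -/g.
have := sqnorm_ge0 (z - x); nra.
Qed.

End Descent.

Lemma projC_eq_set1 {R : realType} {n : nat} (D : set 'rV[R]_n) (x y : 'rV[R]_n)
    (k : R) : 0 < k -> D x ->
  (forall z, D z -> k * sqnorm (z - x) <= sqnorm (z - y) - sqnorm (x - y)) ->
  projC D y = [set x].
Proof.
move=> k_gt0 Dx gap; apply/seteqP; split => [p [Dp p_min]|_ ->] /=.
  have : k * sqnorm (p - x) <= 0.
    by apply: le_trans (gap p Dp) _; rewrite subr_le0; exact: p_min.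
  rewrite pmulr_rle0 // => px_le0; apply/eqP; rewrite -subr_eq0 -sqnorm_eq0.
  by rewrite eq_le px_le0 sqnorm_ge0.
split => // z Dz; rewrite -subr_ge0; apply: le_trans (gap z Dz).
exact: mulr_ge0 (ltW k_gt0) (sqnorm_ge0 _).
Qed.

Theorem theorem2p2 (R : realType) (n s : nat) (f : 'rV[R]_n -> R) (Lf L : R)
  (xstar : 'rV[R]_n) :
  (forall x, differentiable f x) ->
  continuous (grad f) ->
  (exists lb : R, forall x, lb <= f x) ->
  (forall x y, enorm (grad f x - grad f y) <= Lf * enorm (x - y)) ->
  (0 < s)%N -> (s < n)%N ->
  Lf < L ->
  Cs n s xstar ->
  (forall y, Cs n s y -> f xstar <= f y) ->
  L_stationary n s f L xstar /\
  (exists p, projC (Cs n s) (xstar - L^-1 *: grad f xstar) = [set p]).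
Proof.
move=> f_diff _ _ grad_lip s_gt0 s_lt_n Lf_lt_L Cs_xstar xstar_min.
have Lf_ge0 : 0 <= Lf.
  exact: enorm_lipschitz_ge0 _ _ (ltn_trans s_gt0 s_lt_n) grad_lip.
have L_gt0 : 0 < L := le_lt_trans Lf_ge0 Lf_lt_L.
have k_gt0 : 0 < 1 - L^-1 * Lf by rewrite subr_gt0 mulrC ltr_pdivrMr ?mul1r.
have proj_xstar : projC (Cs n s) (xstar - L^-1 *: grad f xstar) = [set xstar].
  apply: projC_eq_set1 k_gt0 Cs_xstar _ => z Cs_z.
  have c_ge0 : 0 <= L^-1 by rewrite invr_ge0 ltW.
  apply: le_trans (gradient_step_gap _ f_diff _ grad_lip _ _ z c_ge0).
  by rewrite lerDl !mulr_ge0 // subr_ge0 xstar_min.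
by split; [split; last rewrite proj_xstar | exists xstar].
Qed.
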